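(* Let $k,n$ be sufficiently large, let $\Phi$ be a quasirandom $k$-CNF on $x_1,\dots,x_n$ and let $\mathcal M$ be a mist of $\Phi$ satisfying (Q1)–(Q3). Let $\omega=\lceil\exp(n/k^2)\rceil$, consider the run $(\sigma^{[t]})$ of Walksat$(\Phi,\omega)$ and let $\mathcal A$ be the event $\sigma^{[0]}\notin\mathcal D(\Phi,\mathcal M)$. Let $\tau_1\notin T(\Phi)$ and $\mu\in\mathcal M$ be such that $\mathrm{dist}(\tau_1,\mu)=\lfloor10\kappa n\rfloor$. Then for all $1\le t_1\le t_2\le\omega$, $$\Pr\big[H_\mu(t_1,t_2)\,\big|\,\mathcal A,\ \sigma^{[t_1]}=\tau_1\big]\le\exp(-\kappa n/2).$$
   Context: $\Phi=\Phi_1\wedge\dots\wedge\Phi_m$ with clauses $\Phi_i=\Phi_{i1}\vee\dots\vee\Phi_{ik}$; $|\Phi_{ij}|$ is the variable of literal $\Phi_{ij}$. $\rho=2^{-k}m/n$, $\kappa=\ln k/k$. $U_\Phi(\sigma)$ is the set of indices of clauses unsatisfied by $\sigma$, $\mathcal U_\Phi(\sigma)=|U_\Phi(\sigma)|$, $T(\Phi)=\{\tau:\mathcal U_\Phi(\tau)\le n\rho/10\}$. $\mathrm{dist}$ is Hamming distance, $\Delta(\sigma,\tau)$ the set of variables where $\sigma,\tau$ differ, $\mathcal D_\sigma(r_1,r_2)=\{\tau:\lfloor r_1\kappa n\rfloor\le\mathrm{dist}(\sigma,\tau)\le\lfloor r_2\kappa n\rfloor\}$, $X_\Phi(W,\sigma)=\sum_{i\in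 U_\Phi(\sigma)}\sum_{j\in[k]}\mathbf 1\{|\Phi_{ij}|\in W\}$. A mist is $\mathcal M\subseteq T(\Phi)$ with pairwise distances at least $2\kappa n$ such that every $\sigma\in T(\Phi)$ is within distance $2\kappa n$ of some element of $\mathcal M$; $\mathcal D(\Phi,\mathcal M)=\bigcup_{\sigma\in\mathcal M}\mathcal D_\sigma(0,10)$. Conditions: (Q1) $|\mathcal D(\Phi,\mathcal M)|\le2^n\exp(-2n/k^2)$; (Q2) $|\mathcal M\cap\mathcal D_\tau(0,10)|\le k$ for all $\tau$; (Q3) for all $\mu\in\mathcal M$, $\sigma\in\mathcal D_\mu(0,100)\setminus T(\Phi)$: $X_\Phi(\Delta(\mu,\sigma),\sigma)\le k\,\mathcal U_\Phi(\sigma)/10$. $\Phi$ is quasirandom if such a mist exists. Walksat$(\Phi,\omega)$: $\sigma^{[0]}$ uniform; at each step $i\le\omega$, halt if $\sigma^{[i]}$ satisfies $\Phi$, otherwise pick a uniformly random unsatisfied clause and uniformly random position $j\in[k]$ and flip that literal's variable to get $\sigma^{[i+1]}$. $H_\mu(t_1,t_2)$ is the event that $\mathrm{dist}(\sigma^{[t_1]},\mu)=\lfloor10\kappa n\rfloor$, $\mathrm{dist}(\sigma^{[t_2]},\mu)=\lfloor5\kappa n\rfloor$, and $\sigma^{[t]}\in\mathcal D_\mu(5,10)\setminus T(\Phi)$ for all $t_1\le t\le t_2$. *)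

From mathcomp Require Import all_boot.
From Stdlib Require Import Reals.

Set Implicit Arguments.
Unset Strict Implicit.
Unset Printing Implicit Defensive.

Notation assign n := {ffun 'I_n -> bool}.

(* A k-CNF with m clauses on n variables: clause i, position j gives the
   literal (variable |Phi_ij|, sign); sign true = positive literal. *)
Definition cnf (n m k : nat) := 'I_m -> 'I_k -> ('I_n * bool).

Definition lit_true n (s : assign n) (l : 'I_n * bool) : bool := s l.1 == l.2.

Definition unsat n m k (Phi : cnf n m k) (s : assign n) : {set 'I_m} :=
  [set i | [forall j, ~~ lit_true s (Phi i j)]].

Definition nunsat n m k (Phi : cnf n m k) (s : assign n) : nat := #|unsat Phi s|.

Definition rho (n m k : nat) : R := (INR m / (pow 2 k * INR n))%R.
Definition kappa (k : nat) : R := (ln (INR k) / INR k)%R.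

Definition Tset n m k (Phi : cnf n m k) : {set assign n} :=
  [set t | if Rle_dec (INR (nunsat Phi t)) (INR n * rho n m k / 10)%R then true else false].

(* floor and ceiling of a real number (Int_part is the floor). *)
Definition flo (r : R) : nat := Z.to_nat (Int_part r).
Definition cei (r : R) : nat := Z.to_nat (- Int_part (- r)).

Definition Delta n (s t : assign n) : {set 'I_n} := [set v | s v != t v].
Definition hdist n (s t : assign n) : nat := #|Delta s t|.

Definition Dball n k (s : assign n) (r1 r2 : R) : {set assign n} :=
  [set t | (flo (r1 * kappa k * INR n) <= hdist s t)%N
           && (hdist s t <= flo (r2 * kappa k * INR n))%N].

Definition Xcnt n m k (Phi : cnf n m k) (W : {set 'I_n}) (s : assign n) : nat :=
  \sum_(i in unsat Phi s) #|[set j : 'I_k | (Phi i j).1 \in W]|.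

Definition is_mist n m k (Phi : cnf n m k) (M : {set assign n}) : Prop :=
  [/\ M \subset Tset Phi,
      (forall s t, s \in M -> t \in M -> s != t ->
         (2 * kappa k * INR n <= INR (hdist s t))%R) &
      (forall s, s \in Tset Phi ->
         exists2 mu, mu \in M & (INR (hdist s mu) <= 2 * kappa k * INR n)%R)].

Definition DPM n k (M : {set assign n}) : {set assign n} :=
  \bigcup_(s in M) Dball k s 0%R 10%R.

Definition Q1 n m k (Phi : cnf n m k) (M : {set assign n}) : Prop :=
  (INR #|DPM k M| <= pow 2 n * exp (- (2 * INR n / (INR k * INR k))))%R.

Definition Q2 n k (M : {set assign n}) : Prop :=
  forall t : assign n, (#|M :&: Dball k t 0%R 10%R| <= k)%N.

Definition Q3 n m k (Phi : cnf n m k) (M : {set assign n}) : Prop :=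
  forall mu s, mu \in M -> s \in Dball k mu 0%R 100%R -> s \notin Tset Phi ->
    (INR (Xcnt Phi (Delta mu s) s) <= INR k * INR (nunsat Phi s) / 10)%R.

Definition quasirandom n m k (Phi : cnf n m k) : Prop :=
  exists M, [/\ is_mist Phi M, Q1 Phi M, Q2 k M & Q3 Phi M].

Definition flip n (s : assign n) (v : 'I_n) : assign n :=
  [ffun x => if x == v then ~~ s x else s x].

(* One-step transition probability of Walksat(Phi, .) from s to s'.
   A satisfying assignment makes the algorithm halt; we model halting by
   keeping the assignment fixed from then on. *)
Definition trans n m k (Phi : cnf n m k) (s s' : assign n) : R :=
  if nunsat Phi s == 0%N then (if s' == s then 1%R else 0%R)
  else (INR #|[set ij : 'I_m * 'I_k |
                (ij.1 \in unsat Phi s) && (flip s (Phi ij.1 ij.2).1 == s')]|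
        / (INR (nunsat Phi s) * INR k))%R.

Definition omega (n k : nat) : nat := cei (exp (INR n / (INR k * INR k))).

Notation run n w := {ffun 'I_w.+1 -> assign n}.

Definition traj n w (p : run n w) (t : nat) : assign n := p (inord t).

Definition weight n m k w (Phi : cnf n m k) (p : run n w) : R :=
  (/ pow 2 n * \big[Rmult/1%R]_(i < w) trans Phi (traj p i) (traj p i.+1))%R.

Definition Prob n m k w (Phi : cnf n m k) (E : pred (run n w)) : R :=
  \big[Rplus/0%R]_(p | E p) weight Phi p.

Definition Hev n m k w (Phi : cnf n m k) (mu : assign n) (t1 t2 : nat)
  (p : run n w) : bool :=
  [&& hdist (traj p t1) mu == flo (10 * kappa k * INR n),
      hdist (traj p t2) mu == flo (5 * kappa k * INR n) &
      [forall t : 'I_w.+1, ((t1 <= t)%N && (t <= t2)%N) ==>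
         (traj p t \in Dball k mu 5%R 10%R :\: Tset Phi)]].

Definition Aev n w k (M : {set assign n}) (p : run n w) : bool :=
  traj p 0 \notin DPM k M.

From Pilot Require Import Defs.
From HB Require Import structures.
From mathcomp Require Import all_boot.
From Stdlib Require Import Reals Lra Lia.

(* While sigma stays in the annulus D_mu(5,10) outside T(Phi), the potential
   2^-dist(sigma, mu) is a supermartingale of the Walksat chain: by (Q3) at most a
   tenth of the literals Walksat may flip move sigma towards mu, and every flip
   changes the distance by exactly one.  The potential equals 2^-floor(10 kappa n)
   at time t1 and 2^-floor(5 kappa n) at time t2, so the event has conditional
   probability at most 2^(floor(5 kappa n) - floor(10 kappa n)) <= exp(-kappa n/2).
   Events that are intersections of per-time constraints on the run are evaluated
   by the forward recursion of the chain, which turns the optional-stopping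
   argument into a finite summation. *)

Set Implicit Arguments.
Unset Strict Implicit.

HB.instance Definition _ := Monoid.isComLaw.Build R 0%R Rplus
  (fun x y z => esym (Rplus_assoc x y z)) Rplus_comm Rplus_0_l.
HB.instance Definition _ := Monoid.isComLaw.Build R 1%R Rmult
  (fun x y z => esym (Rmult_assoc x y z)) Rmult_comm Rmult_1_l.
HB.instance Definition _ := Monoid.isMulLaw.Build R 0%R Rmult Rmult_0_l Rmult_0_r.
HB.instance Definition _ :=
  Monoid.isAddLaw.Build R Rmult Rplus Rmult_plus_distr_r Rmult_plus_distr_l.

Lemma flo_mono r1 r2 : (r1 <= r2)%R -> (flo r1 <= flo r2)%N.
Proof.
move=> H; rewrite /flo; apply/leP.
have [A1 B1] := base_Int_part r1; have [A2 B2] := base_Int_part r2.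
have : (IZR (Int_part r1) < IZR (Int_part r2 + 1))%R by rewrite plus_IZR; lra.
move/lt_IZR => H3; lia.
Qed.

Lemma flo_bounds r : (0 <= r)%R -> (r - 1 < INR (flo r) <= r)%R.
Proof.
move=> H; have [A1 B1] := base_Int_part r.
have H0 : (0 <= Int_part r)%Z.
  have : (-1 < IZR (Int_part r))%R by lra.
  change (-1)%R with (IZR (-1)); move/lt_IZR; lia.
rewrite /flo INR_IZR_INZ Znat.Z2Nat.id //; lra.
Qed.

Lemma forall_at (A : Type) w (p : {ffun 'I_w.+1 -> A}) j (Q : pred A) :
  (j <= w)%N -> [forall i : 'I_w.+1, (i == j :> nat) ==> Q (p i)] = Q (p (inord j)).
Proof.
move=> jw; apply/forallP/idP => [/(_ (inord j))|Hq i]; first by rewrite inordK // eqxx.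
by apply/implyP => /eqP ij; have -> : i = inord j by apply: val_inj; rewrite /= inordK // -ij.
Qed.

Lemma forall_andb (T : finType) (a b : pred T) :
  [forall x, a x && b x] = [forall x, a x] && [forall x, b x].
Proof.
apply/forallP/andP => [H|[/forallP Ha /forallP Hb] x]; last by rewrite Ha Hb.
by split; apply/forallP => x; case/andP: (H x).
Qed.

Lemma Rsum_le (I : Type) (r : seq I) (P : pred I) (F G : I -> R) :
  (forall i, P i -> (F i <= G i)%R) ->
  (\big[Rplus/0%R]_(i <- r | P i) F i <= \big[Rplus/0%R]_(i <- r | P i) G i)%R.
Proof. by move=> H; apply: (big_ind2 (fun a b => a <= b)%R) => // *; lra. Qed.

Lemma Rsum_ge0 (I : Type) (r : seq I) (P : pred I) (F : I -> R) :
  (forall i, P i -> (0 <= F i)%R) -> (0 <= \big[Rplus/0%R]_(i <- r | P i) F i)%R.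
Proof. by move=> H; apply: (big_ind (fun a => 0 <= a)%R) => // *; lra. Qed.

Lemma Rsum_const (I : finType) (P : pred I) (c : R) :
  \big[Rplus/0%R]_(i | P i) c = (INR #|P| * c)%R.
Proof.
rewrite big_const; elim: #|P| => [|n IH]; first by rewrite /=; lra.
by rewrite iterS IH S_INR; lra.
Qed.

Lemma INR_sum (I : Type) (r : seq I) (P : pred I) (F : I -> nat) :
  INR (\sum_(i <- r | P i) F i) = \big[Rplus/0%R]_(i <- r | P i) INR (F i).
Proof. by apply: (big_morph INR (id1 := 0%R) (op1 := Rplus)) => [x y|]; rewrite ?plus_INR. Qed.

Lemma INR_card (I : finType) (A : {pred I}) :
  INR #|A| = \big[Rplus/0%R]_i (if i \in A then 1 else 0)%R.
Proof. by rewrite -big_mkcond Rsum_const Rmult_1_r. Qed.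

Lemma Rinv_ge0 (x : R) : (0 <= x)%R -> (0 <= / x)%R.
Proof.
case/Rle_lt_or_eq_dec => [x_gt0|<-]; last by rewrite Rinv_0; lra.
exact/Rlt_le/Rinv_0_lt_compat.
Qed.

Section ForwardMass.
Variables (A : finType) (T : A -> A -> R) (pi : R).

Definition path_weight w (p : {ffun 'I_w.+1 -> A}) : R :=
  (pi * \big[Rmult/1%R]_(i < w) T (p (inord i)) (p (inord i.+1)))%R.

(* [fwd_mass G i s]: total weight of the paths of length [i] ending in [s]
   that satisfy the constraint [G t] at every time [t <= i]. *)
Fixpoint fwd_mass (G : nat -> pred A) (i : nat) (s : A) : R :=
  if G i s then
    if i is i'.+1 then \big[Rplus/0%R]_x (fwd_mass G i' x * T x s)%R else pi
  else 0%R.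

Definition path_rcons w (q : {ffun 'I_w.+1 -> A}) (s : A) : {ffun 'I_w.+2 -> A} :=
  [ffun i : 'I_w.+2 => if (i < w.+1)%N then q (inord i) else s].

Lemma path_rcons_inord w q s j : (j <= w)%N -> @path_rcons w q s (inord j) = q (inord j).
Proof. by move=> jw; rewrite ffunE inordK ?ltnS // (leq_trans jw). Qed.

Lemma path_rcons_last w q s : @path_rcons w q s ord_max = s.
Proof. by rewrite ffunE /= ltnn. Qed.

Lemma big_path_rcons w (P : pred {ffun 'I_w.+2 -> A}) (F : {ffun 'I_w.+2 -> A} -> R) :
  \big[Rplus/0%R]_(p | P p) F p =
  \big[Rplus/0%R]_(qs : {ffun 'I_w.+1 -> A} * A | P (path_rcons qs.1 qs.2))
     F (path_rcons qs.1 qs.2).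
Proof.
pose split_last (p : {ffun 'I_w.+2 -> A}) := ([ffun i : 'I_w.+1 => p (inord i)], p ord_max).
rewrite (reindex (fun qs => path_rcons qs.1 qs.2)) //; exists split_last.
  move=> [q s] _; rewrite /split_last path_rcons_last; congr pair.
  by apply/ffunP => i; rewrite !ffunE inordK ?ltn_ord ?inord_val // ltnS ltnW.
move=> p _; apply/ffunP => i; rewrite !ffunE /=; case: ifP => Hi.
  by congr (p _); apply: val_inj; rewrite /= !inordK // ltnW.
congr (p _); apply: val_inj => /=; apply/eqP.
by rewrite eqn_leq leqNgt Hi -ltnS ltn_ord.
Qed.

Lemma path_weight_rcons w q s :
  path_weight (@path_rcons w q s) = (path_weight q * T (q ord_max) s)%R.
Proof.
have last_max j : inord j = ord_max :> 'I_j.+1 by apply: val_inj; rewrite /= inordK.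
rewrite /path_weight big_ord_recr /= path_rcons_inord // !last_max path_rcons_last.
rewrite Rmult_assoc; congr (_ * (_ * _))%R.
by apply: eq_bigr => i _; rewrite !path_rcons_inord // ltnW.
Qed.

Lemma forall_path_rcons (G : nat -> pred A) w q s :
  [forall i : 'I_w.+2, G i (@path_rcons w q s i)] =
  [forall i : 'I_w.+1, G i (q i)] && G w.+1 s.
Proof.
apply/forallP/andP => [H|[/forallP H1 H2] i].
  split; last by have := H ord_max; rewrite path_rcons_last.
  apply/forallP => i; have := H (inord i).
  rewrite path_rcons_inord; last by rewrite -ltnS.
  by rewrite inordK ?inord_val //; apply: leqW.
rewrite ffunE; case: ifP => Hi; first by have := H1 (inord i); rewrite inordK.
by have -> : nat_of_ord i = w.+1 by apply/eqP; rewrite eqn_leq -ltnS ltn_ord leqNgt Hi.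
Qed.

Lemma sum_path_weight_forall (G : nat -> pred A) w (f : A -> R) :
  \big[Rplus/0%R]_(p : {ffun 'I_w.+1 -> A} | [forall i : 'I_w.+1, G i (p i)])
      (path_weight p * f (p ord_max))%R
  = \big[Rplus/0%R]_s (fwd_mass G w s * f s)%R.
Proof.
elim: w f => [|w IH] f.
  rewrite (reindex (fun s : A => [ffun _ : 'I_1 => s])); last first.
    exists (fun p : {ffun 'I_1 -> A} => p ord0) => [s _|p _]; first by rewrite ffunE.
    by apply/ffunP => i; rewrite ffunE (ord1 i).
  rewrite big_mkcond; apply: eq_bigr => s _ /=.
  have -> : [forall i : 'I_1, G i ([ffun=> s] i)] = G 0 s.
    by apply/forallP/idP => [/(_ ord0)|H i]; rewrite ?ffunE // (ord1 i).
  by rewrite /path_weight big_ord0 ffunE; case: (G 0 s); lra.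
rewrite big_path_rcons /=.
under eq_bigl do rewrite forall_path_rcons.
under eq_bigr do rewrite path_weight_rcons path_rcons_last Rmult_assoc.
rewrite -(pair_big (fun q : {ffun 'I_w.+1 -> A} => [forall i : 'I_w.+1, G i (q i)])
            (fun s => G w.+1 s) (fun q s => path_weight q * (T (q ord_max) s * f s))%R) /=.
under eq_bigr do rewrite -big_distrr.
rewrite (IH (fun x => \big[Rplus/0%R]_(s | G w.+1 s) (T x s * f s)))%R /=.
under eq_bigr do rewrite big_distrr.
rewrite exchange_big big_mkcond; apply: eq_bigr => s _.
case: (G w.+1 s); last by rewrite Rmult_0_l.
by rewrite big_distrl; apply: eq_bigr => x _; exact: esym (Rmult_assoc _ _ _).
Qed.

Hypotheses (T_ge0 : forall x y, (0 <= T x y)%R) (pi_ge0 : (0 <= pi)%R).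

Lemma fwd_mass_ge0 G i s : (0 <= fwd_mass G i s)%R.
Proof.
elim: i s => [|i IH] s /=; case: (G _ s) => //; try lra.
by apply: Rsum_ge0 => x _; apply: Rmult_le_pos.
Qed.

Lemma fwd_mass0 G i s : ~~ G i s -> fwd_mass G i s = 0%R.
Proof. by case: i => [|i] /= /negbTE ->. Qed.

Lemma fwd_mass_mono (G1 G2 : nat -> pred A) i s :
  (forall j x, G1 j x -> G2 j x) -> (fwd_mass G1 i s <= fwd_mass G2 i s)%R.
Proof.
move=> G12; case E: (G1 i s); last by rewrite fwd_mass0 ?E //; apply: fwd_mass_ge0.
elim: i s E => [|i IH] s E /=; rewrite E (G12 _ _ E); first lra.
apply: Rsum_le => x _; apply: Rmult_le_compat_r => //.
case Ex: (G1 i x); first exact: IH.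
by rewrite fwd_mass0 ?Ex //; apply: fwd_mass_ge0.
Qed.

Lemma sum_fwd_mass_super_step (G : nat -> pred A) i (phi : A -> R) :
  (forall s, 0 <= phi s)%R ->
  (forall x, G i x -> \big[Rplus/0%R]_s (T x s * phi s) <= phi x)%R ->
  (\big[Rplus/0%R]_s (fwd_mass G i.+1 s * phi s)
     <= \big[Rplus/0%R]_s (fwd_mass G i s * phi s))%R.
Proof.
move=> phi_ge0 super.
apply: (Rle_trans _ (\big[Rplus/0%R]_s \big[Rplus/0%R]_x (fwd_mass G i x * T x s * phi s))%R).
  apply: Rsum_le => s _ /=; case: (G i.+1 s); first by rewrite big_distrl; apply: Rle_refl.
  rewrite Rmult_0_l; apply: Rsum_ge0 => x _.
  by apply: Rmult_le_pos => //; apply: Rmult_le_pos => //; apply: fwd_mass_ge0.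
rewrite exchange_big; apply: Rsum_le => x _.
case Gx: (G i x).
  under eq_bigr do rewrite Rmult_assoc.
  by rewrite -big_distrr; apply: Rmult_le_compat_l; [apply: fwd_mass_ge0|apply: super].
rewrite fwd_mass0 ?Gx //; under eq_bigr do rewrite !Rmult_0_l.
by rewrite big1 //; lra.
Qed.

Lemma sum_fwd_mass_super (G : nat -> pred A) (phi : A -> R) i j :
  (forall s, 0 <= phi s)%R -> (i <= j)%N ->
  (forall t x, (i <= t < j)%N -> G t x ->
     (\big[Rplus/0%R]_s (T x s * phi s) <= phi x)%R) ->
  (\big[Rplus/0%R]_s (fwd_mass G j s * phi s)
     <= \big[Rplus/0%R]_s (fwd_mass G i s * phi s))%R.
Proof.
move=> phi_ge0 /subnKC <-; elim: (j - i)%N => [|d IH] super; rewrite ?addn0; first lra.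
rewrite addnS; apply: Rle_trans (IH _); last first.
  by move=> t x /andP[it td]; apply: super; rewrite it addnS ltnS ltnW.
by apply: sum_fwd_mass_super_step => // x; apply: super; rewrite leq_addr addnS ltnS /=.
Qed.

Lemma fwd_mass_hitting_bound (G : nat -> pred A) (phi : A -> R) i j c d :
  (forall s, 0 <= phi s)%R -> (i <= j)%N ->
  (forall t x, (i <= t < j)%N -> G t x ->
     (\big[Rplus/0%R]_s (T x s * phi s) <= phi x)%R) ->
  (forall s, G j s -> c <= phi s)%R -> (forall s, G i s -> phi s <= d)%R ->
  (c * \big[Rplus/0%R]_s fwd_mass G j s <= d * \big[Rplus/0%R]_s fwd_mass G i s)%R.
Proof.
move=> phi_ge0 ij super phi_low phi_up.
have low : (\big[Rplus/0%R]_s (c * fwd_mass G j s)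
            <= \big[Rplus/0%R]_s (fwd_mass G j s * phi s))%R.
  apply: Rsum_le => s _; case Gs: (G j s); last by rewrite fwd_mass0 ?Gs //; lra.
  by rewrite Rmult_comm; apply: Rmult_le_compat_l; [apply: fwd_mass_ge0|apply: phi_low].
have up : (\big[Rplus/0%R]_s (fwd_mass G i s * phi s)
           <= \big[Rplus/0%R]_s (d * fwd_mass G i s))%R.
  apply: Rsum_le => s _; case Gs: (G i s); last by rewrite fwd_mass0 ?Gs //; lra.
  by rewrite Rmult_comm; apply: Rmult_le_compat_r; [apply: fwd_mass_ge0|apply: phi_up].
rewrite !big_distrr.
exact: Rle_trans low (Rle_trans _ _ _ (sum_fwd_mass_super phi_ge0 ij super) up).
Qed.

Hypothesis T_stoch : forall x, \big[Rplus/0%R]_s T x s = 1%R.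

Lemma sum_fwd_mass_le (G : nat -> pred A) i j : (i <= j)%N ->
  (\big[Rplus/0%R]_s fwd_mass G j s <= \big[Rplus/0%R]_s fwd_mass G i s)%R.
Proof.
move=> ij; rewrite -[X in (X <= _)%R]Rmult_1_l -[X in (_ <= X)%R]Rmult_1_l.
apply: (@fwd_mass_hitting_bound G (fun _ => 1%R)) => // [s|t x _ _|s _|s _]; try lra.
by under eq_bigr do rewrite Rmult_1_r; rewrite T_stoch; lra.
Qed.

Lemma sum_fwd_mass_eq (G : nat -> pred A) i j : (i <= j)%N ->
  (forall t s, (i < t)%N -> G t s) ->
  \big[Rplus/0%R]_s fwd_mass G j s = \big[Rplus/0%R]_s fwd_mass G i s.
Proof.
move=> /subnKC <- G_later; elim: (j - i)%N => [|d IH]; rewrite ?addn0 // addnS -IH /=.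
rewrite (eq_bigr (fun s => \big[Rplus/0%R]_x (fwd_mass G (i + d) x * T x s))%R); last first.
  by move=> s _; rewrite G_later // ltnS leq_addr.
by rewrite exchange_big; apply: eq_bigr => x _; rewrite -big_distrr T_stoch; exact: Rmult_1_r.
Qed.

End ForwardMass.

Section Walksat.
Variables (n m k : nat) (Phi : cnf n m k).

Lemma inv_pow2_ge0 : (0 <= / 2 ^ n)%R.
Proof. by apply/Rlt_le/Rinv_0_lt_compat/pow_lt; lra. Qed.

Lemma trans_ge0 s s' : (0 <= trans Phi s s')%R.
Proof.
rewrite /trans; case: ifP => _; first by case: ifP => _; lra.
by apply: Rmult_le_pos; [apply: pos_INR|apply/Rinv_ge0/Rmult_le_pos; apply: pos_INR].
Qed.

Lemma sum_unsat_pairs (s : assign n) (F : 'I_m * 'I_k -> R) :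
  \big[Rplus/0%R]_(ij : 'I_m * 'I_k | ij.1 \in unsat Phi s) F ij =
  \big[Rplus/0%R]_(i in unsat Phi s) \big[Rplus/0%R]_j F (i, j).
Proof.
rewrite (pair_big_dep (fun i => i \in unsat Phi s) (fun _ _ => true) (fun i j => F (i, j))).
by apply: eq_big => [[i j]|[i j] _] //=; rewrite andbT.
Qed.

Lemma sum_unsat_pairs_const (s : assign n) (c : R) :
  \big[Rplus/0%R]_(ij : 'I_m * 'I_k | ij.1 \in unsat Phi s) c
  = (INR (nunsat Phi s) * INR k * c)%R.
Proof.
rewrite sum_unsat_pairs (eq_bigr (fun _ => INR k * c)%R) => [|i _]; last first.
  by rewrite Rsum_const card_ord.
by rewrite Rsum_const Rmult_assoc.
Qed.

Lemma sum_trans (s : assign n) (h : assign n -> R) : nunsat Phi s != 0%N ->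
  \big[Rplus/0%R]_s' (trans Phi s s' * h s')%R =
  (\big[Rplus/0%R]_(ij : 'I_m * 'I_k | ij.1 \in unsat Phi s)
      h (flip s (Phi ij.1 ij.2).1) / (INR (nunsat Phi s) * INR k))%R.
Proof.
move=> U0; rewrite /trans (negbTE U0).
set N := (INR _ * INR k)%R; set g := fun ij : 'I_m * 'I_k => flip s (Phi ij.1 ij.2).1.
rewrite (partition_big g xpredT) // /Rdiv big_distrl; apply: eq_bigr => s' _.
rewrite big_distrl.
transitivity (\big[Rplus/0%R]_(ij | (ij.1 \in unsat Phi s) && (g ij == s')) (h s' * / N))%R;
  last by apply: eq_bigr => ij /andP[_ /eqP <-].
rewrite Rsum_const Rmult_assoc [(/ N * _)%R]Rmult_comm; congr (INR _ * _)%R.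
by apply: eq_card => ij; rewrite inE unfold_in.
Qed.

Lemma trans_stoch s : (0 < k)%N -> \big[Rplus/0%R]_s' trans Phi s s' = 1%R.
Proof.
move=> k_gt0; have [U0|U0] := eqVneq (nunsat Phi s) 0%N.
  rewrite /trans U0 eqxx (bigD1 s) //= eqxx big1 => [|s' /negbTE ->]; lra.
have := sum_trans (fun _ => 1%R) U0; under eq_bigr do rewrite Rmult_1_r.
move=> ->; rewrite sum_unsat_pairs_const; field.
split; apply: not_0_INR; apply/eqP; [by rewrite -lt0n|exact: U0].
Qed.

(* Plain [Delta] would resolve to the Reals constant of that name. *)
Lemma hdist_flip (s mu : assign n) v :
  hdist (flip s v) mu = if v \in Defs.Delta s mu then (hdist s mu).-1 else (hdist s mu).+1.
Proof.
have flipE x : (x \in Defs.Delta (flip s v) mu) =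
    if x == v then x \notin Defs.Delta s mu else x \in Defs.Delta s mu.
  by rewrite !inE ffunE; case: (eqVneq x v) => [->|] //; case: (s v); case: (mu v).
rewrite /hdist; case: ifP => Hv.
  rewrite (cardsD1 v (Defs.Delta s mu)) Hv add1n succnK.
  apply: eq_card => x; rewrite flipE !inE; move: Hv; rewrite inE.
  by case: (eqVneq x v) => [->|] // ->.
have := cardsU1 v (Defs.Delta s mu); rewrite Hv add1n => <-.
apply: eq_card => x; rewrite flipE !inE; move: Hv; rewrite inE.
by case: (eqVneq x v) => [->|] // ->.
Qed.

Lemma sum_unsat_pairs_Delta (s mu : assign n) :
  \big[Rplus/0%R]_(ij : 'I_m * 'I_k | ij.1 \in unsat Phi s)
     (if (Phi ij.1 ij.2).1 \in Defs.Delta s mu then 1 else 0)%R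
  = INR (Xcnt Phi (Defs.Delta mu s) s).
Proof.
have Delta_sym : Defs.Delta s mu = Defs.Delta mu s by apply/setP => v; rewrite !inE eq_sym.
rewrite sum_unsat_pairs /Xcnt INR_sum; apply: eq_bigr => i _.
by rewrite INR_card; apply: eq_bigr => j _; rewrite inE Delta_sym.
Qed.

(* A uniformly chosen literal of an unsatisfied clause moves towards [mu] with
   probability [X / (k U) <= 1/10]; each flip changes the distance by one, so
   [2^-dist] is multiplied in expectation by at most [1/10 * 2 + 9/10 * 1/2 < 1]. *)
Lemma halfpow_hdist_supermartingale (s mu : assign n) :
  (0 < k)%N -> nunsat Phi s != 0%N ->
  (INR (Xcnt Phi (Defs.Delta mu s) s) <= INR k * INR (nunsat Phi s) / 10)%R ->
  (\big[Rplus/0%R]_s' (trans Phi s s' * (/ 2) ^ (hdist s' mu)) <= (/ 2) ^ (hdist s mu))%R.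
Proof.
move=> k_gt0 U0 HX; rewrite sum_trans //.
set phi := ((/ 2) ^ hdist s mu)%R.
have phi_flip ij : ((/ 2) ^ hdist (flip s (Phi ij.1 ij.2).1) mu
   = / 2 * phi + 3 / 2 * phi * (if (Phi ij.1 ij.2).1 \in Defs.Delta s mu then 1 else 0))%R.
  rewrite hdist_flip /phi; case: ifP => Hv /=; last by field.
  have Hd : (0 < hdist s mu)%N by rewrite /hdist card_gt0; apply/set0Pn; exists (Phi ij.1 ij.2).1.
  by rewrite -(prednK Hd) /=; field.
rewrite (eq_bigr _ (fun ij _ => phi_flip ij)) big_split /= -!big_distrr /=.
rewrite sum_unsat_pairs_const sum_unsat_pairs_Delta.
have HU : (0 < INR (nunsat Phi s))%R by apply: lt_0_INR; apply/ltP; rewrite lt0n.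
have Hk : (0 < INR k)%R by apply: lt_0_INR; apply/ltP.
have phi_ge0 : (0 <= phi)%R by apply: pow_le; lra.
apply: (Rmult_le_reg_r (INR (nunsat Phi s) * INR k)); first exact: Rmult_lt_0_compat.
rewrite /Rdiv Rmult_assoc Rinv_l; last by apply: Rgt_not_eq; apply: Rmult_lt_0_compat.
have := pos_INR (Xcnt Phi (Defs.Delta mu s) s); nra.
Qed.

Lemma nunsat_notT (s : assign n) : (0 < n)%N -> s \notin Tset Phi -> nunsat Phi s != 0%N.
Proof.
move=> n_gt0; rewrite inE; case: Rle_dec => // notT _; apply/eqP => U0; apply: notT.
rewrite U0 /= /rho.
have : (0 < INR n)%R by apply: lt_0_INR; apply/ltP.
have : (0 < 2 ^ k)%R by apply: pow_lt; lra.
have := pos_INR m; move=> *; apply: Rmult_le_pos; last lra.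
apply: Rmult_le_pos; first lra.
by apply: Rmult_le_pos => //; apply/Rlt_le/Rinv_0_lt_compat/Rmult_lt_0_compat.
Qed.

Lemma Prob_fwd_mass w (E : pred (run n w)) (G : nat -> pred (assign n)) :
  (forall p, E p = [forall i : 'I_w.+1, G i (p i)]) ->
  Prob Phi E = \big[Rplus/0%R]_s fwd_mass (trans Phi) (/ 2 ^ n) G w s.
Proof.
move=> EG; rewrite -(eq_bigr _ (fun s _ => Rmult_1_r _)).
rewrite -(sum_path_weight_forall (trans Phi) (/ 2 ^ n) G w (fun _ => 1%R)) /Prob.
by apply: eq_big => [p|p _]; rewrite ?EG // Rmult_1_r.
Qed.

End Walksat.

Lemma kappa_mul_ge1 k n : (4 <= k)%N -> (k <= n)%N -> (1 <= kappa k * INR n)%R.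
Proof.
move=> k4 kn.
have K4 : (4 <= INR k)%R by apply: (Rle_trans _ (INR 4)); [simpl; lra|apply/le_INR/leP].
have KN : (INR k <= INR n)%R by apply/le_INR/leP.
have ln4 : (1 < ln 4)%R.
  by rewrite (_ : 4 = 2 * 2)%R ?ln_mult; [have := ln_lt_2; lra|lra|lra|lra].
have lnk : (ln 4 <= ln (INR k))%R.
  by case/Rle_lt_or_eq_dec: K4 => [?|<-]; [apply/Rlt_le/ln_increasing; lra|lra].
have : (1 <= / INR k * INR n)%R.
  rewrite -(Rinv_l (INR k)); last lra.
  by apply: Rmult_le_compat_l; [apply/Rlt_le/Rinv_0_lt_compat; lra|lra].
rewrite /kappa /Rdiv Rmult_assoc; nra.
Qed.

Lemma half_pow_flo_gap x : (1 <= x)%R ->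
  ((/ 2) ^ flo (10 * x) <= exp (- (x / 2)) * (/ 2) ^ flo (5 * x))%R.
Proof.
move=> x_ge1; set L := flo (10 * x); set l := flo (5 * x).
have lL : (l <= L)%N by apply: flo_mono; lra.
have [L_low _] := flo_bounds (r := (10 * x)%R) ltac:(lra).
have [_ l_up] := flo_bounds (r := (5 * x)%R) ltac:(lra).
rewrite -(subnKC lL) pow_add [(exp _ * _)%R]Rmult_comm.
apply: Rmult_le_compat_l; first by apply: pow_le; lra.
rewrite pow_inv -Rpower_pow ?exp_Ropp; last lra.
apply: Rinv_le_contravar; first exact: exp_pos.
rewrite /Rpower minus_INR; last exact/leP.
apply: Rlt_le; apply: exp_increasing.
have := ln_lt_2; rewrite -/L -/l in L_low l_up; nra.
Qed.

Section Events.
Variables (n m k : nat) (Phi : cnf n m k) (M : {set assign n}) (mu tau1 : assign n).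
Variables (t1 t2 : nat).

Definition start_cond (i : nat) (s : assign n) : bool :=
  ((i == 0)%N ==> (s \notin DPM k M)) && ((i == t1) ==> (s == tau1)).

Definition hit_cond (i : nat) (s : assign n) : bool :=
  [&& (i == t1) ==> (hdist s mu == flo (10 * kappa k * INR n)),
      (i == t2) ==> (hdist s mu == flo (5 * kappa k * INR n)) &
      (t1 <= i <= t2)%N ==> (s \in Dball k mu 5 10 :\: Tset Phi)].

Lemma start_condP w (p : run n w) : (t1 <= w)%N ->
  Aev k M p && (traj p t1 == tau1) = [forall i : 'I_w.+1, start_cond i (p i)].
Proof.
move=> t1w; rewrite forall_andb (@forall_at _ _ p 0 (fun s => s \notin DPM k M)) //.
by rewrite (@forall_at _ _ p t1 (pred1 tau1)).
Qed.

Lemma hit_condP w (p : run n w) : (t1 <= w)%N -> (t2 <= w)%N ->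
  Hev Phi mu t1 t2 p = [forall i : 'I_w.+1, hit_cond i (p i)].
Proof.
move=> t1w t2w; rewrite !forall_andb.
rewrite (@forall_at _ _ p t1 (fun s => hdist s mu == _)) //.
rewrite (@forall_at _ _ p t2 (fun s => hdist s mu == _)) //.
by congr [&& _, _ & _]; apply: eq_forallb => i; rewrite /traj inord_val.
Qed.

Lemma hit_cond_supermartingale t x : Q3 Phi M -> mu \in M -> (0 < k)%N -> (0 < n)%N ->
  (0 <= kappa k * INR n)%R -> (t1 <= t < t2)%N -> hit_cond t x ->
  (\big[Rplus/0%R]_s (trans Phi x s * (/ 2) ^ hdist s mu) <= (/ 2) ^ hdist x mu)%R.
Proof.
move=> HQ3 mu_M k_gt0 n_gt0 kn_ge0 /andP[t1t tt2] /and3P[_ _ /implyP].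
rewrite t1t ltnW // inE => /(_ isT) /andP[notT x_near].
apply: halfpow_hdist_supermartingale => //; first exact: nunsat_notT.
apply: HQ3 => //; move: x_near; rewrite !inE => /andP[lo hi].
by apply/andP; split; [apply: leq_trans lo|apply: leq_trans hi _]; apply: flo_mono; lra.
Qed.

Lemma start_hit_mass_bound w : Q3 Phi M -> mu \in M -> (0 < k)%N -> (0 < n)%N ->
  (0 <= kappa k * INR n)%R -> (t1 <= t2)%N -> (t2 <= w)%N ->
  let mass G := \big[Rplus/0%R]_s fwd_mass (trans Phi) (/ 2 ^ n) G w s in
  ((/ 2) ^ flo (5 * kappa k * INR n) * mass (fun i s => start_cond i s && hit_cond i s)
   <= (/ 2) ^ flo (10 * kappa k * INR n) * mass start_cond)%R.
Proof.
move=> HQ3 mu_M k_gt0 n_gt0 kn_ge0 t12 t2w mass.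
have T_ge0 := @trans_ge0 _ _ _ Phi.
have pi_ge0 := @inv_pow2_ge0 n.
have T_stoch x := trans_stoch Phi x k_gt0.
set a := fwd_mass (trans Phi) (/ 2 ^ n); pose GL i s := start_cond i s && hit_cond i s.
have GL_t2 := sum_fwd_mass_le T_ge0 pi_ge0 T_stoch GL t2w.
have GL_GR : (\big[Rplus/0%R]_s a GL t1 s <= \big[Rplus/0%R]_s a start_cond t1 s)%R.
  by apply: Rsum_le => s _; apply: fwd_mass_mono => // j x /andP[].
have GR_w : mass start_cond = \big[Rplus/0%R]_s a start_cond t1 s.
  apply: (sum_fwd_mass_eq _ T_stoch (leq_trans t12 t2w)) => t s t1t.
  by rewrite /start_cond gtn_eqF ?(gtn_eqF t1t) //; apply: leq_trans t1t.
rewrite GR_w; apply: Rle_trans (Rmult_le_compat_l _ _ _ _ GL_t2) _; first by apply: pow_le; lra.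
apply: Rle_trans (Rmult_le_compat_l _ _ _ _ GL_GR); last by apply: pow_le; lra.
apply: (fwd_mass_hitting_bound T_ge0 pi_ge0 (phi := fun s => (/ 2) ^ hdist s mu)%R) => //.
- by move=> s; apply: pow_le; lra.
- by move=> t x tt /andP[_ Hx]; apply: (hit_cond_supermartingale HQ3 mu_M k_gt0 n_gt0 _ tt Hx).
- by move=> s /andP[_ /and3P[_ /implyP/(_ (eqxx _))/eqP-> _]]; apply: Rle_refl.
- by move=> s /andP[_ /and3P[/implyP/(_ (eqxx _))/eqP-> _ _]]; apply: Rle_refl.
Qed.

End Events.

Theorem mainTheorem6 :
  exists k0 : nat, forall k : nat, (k0 <= k)%N ->
  exists n0 : nat, forall n : nat, (n0 <= n)%N ->
  forall (m : nat) (Phi : cnf n m k) (M : {set assign n}),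
    quasirandom Phi ->
    is_mist Phi M -> Q1 Phi M -> Q2 k M -> Q3 Phi M ->
  forall (tau1 mu : assign n),
    tau1 \notin Tset Phi -> mu \in M ->
    hdist tau1 mu = flo (10 * kappa k * INR n) ->
  forall t1 t2 : nat, (1 <= t1)%N -> (t1 <= t2)%N -> (t2 <= omega n k)%N ->
    (Prob Phi (fun p : run n (omega n k) =>
        [&& Hev Phi mu t1 t2 p, Aev k M p & traj p t1 == tau1])
     <= exp (- (kappa k * INR n / 2)) *
        Prob Phi (fun p : run n (omega n k) => Aev k M p && (traj p t1 == tau1)))%R.
Proof.
(* Only (Q3) is needed; the position of [tau1] is already enforced by [H_mu]. *)
exists 4%N => k k4; exists k => n kn m Phi M _ _ _ _ HQ3 tau1 mu _ mu_M _ t1 t2 _ t12 t2w.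
have k_gt0 : (0 < k)%N by apply: leq_trans k4.
have n_gt0 : (0 < n)%N by apply: leq_trans kn.
have kn_ge1 := kappa_mul_ge1 k4 kn.
rewrite (@Prob_fwd_mass _ _ _ Phi _ _ (fun i s => start_cond k M tau1 t1 i s &&
                                               hit_cond Phi mu t1 t2 i s)) => [|p]; last first.
  by rewrite forall_andb -start_condP -?hit_condP ?(leq_trans t12) // andbC.
rewrite (@Prob_fwd_mass _ _ _ Phi _ _ (start_cond k M tau1 t1)) => [|p]; last first.
  exact/start_condP/(leq_trans t12).
have gap := half_pow_flo_gap kn_ge1; rewrite -(Rmult_assoc 10) -(Rmult_assoc 5) in gap.
have lo_gt0 : (0 < (/ 2) ^ flo (5 * kappa k * INR n))%R by apply: pow_lt; lra.
apply: (Rmult_le_reg_l _ _ _ lo_gt0).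
have kn_ge0 := Rle_trans _ _ _ Rle_0_1 kn_ge1.
apply: Rle_trans (start_hit_mass_bound tau1 HQ3 mu_M k_gt0 n_gt0 kn_ge0 t12 t2w) _.
rewrite -Rmult_assoc [(_ * exp _)%R]Rmult_comm; apply: Rmult_le_compat_r => //.
by apply: Rsum_ge0 => s _; apply: fwd_mass_ge0 => [x y|]; [apply: trans_ge0|apply: inv_pow2_ge0].
Qed.
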